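(* Let $G$ be a group with identity $\mathbf{1}$, $S\subseteq G$ inverse-closed, and $X=\mathrm{Cay}(G;S)$. Let $\mathcal{A}^0_{\mathbf{1}}(X)$ be the group of colour-preserving automorphisms of $X$ that fix the vertex $\mathbf{1}$, and let \[S^*=\{\, s\in S \mid \text{no nontrivial element of } \mathcal{A}^0_{\mathbf{1}}(X) \text{ fixes } s\,\}.\] If $S^*$ generates $G$, then $X$ is strongly CCA.
   Context: Graphs are simple (possibly infinite). For an inverse-closed subset $S$ of a group $G$, $\mathrm{Cay}(G;S)$ has vertex set $G$ and an edge from $g$ to $gs$ for each $g\in G$, $s\in S$; the edge $g$—$gs$ is coloured $\{s,s^{-1}\}$. A graph automorphism is colour-preserving if it maps every edge to an edge of the same colour, and colour-permuting if whenever two edges have the same colour their images also have the same colour. A map $\varphi\colon G\to G$ is affine if $\varphi(x)=\alpha(gx)$ for some $\alpha\in\mathrm{Aut}(G)$, $g\in G$. $\mathrm{Cay}(G;S)$ is strongly CCA if every colour-permuting automorphism of it is affine. *)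

Record is_group (G : Type) (mul : G -> G -> G) (one : G) (inv : G -> G) : Prop := {
  grp_assoc : forall x y z, mul x (mul y z) = mul (mul x y) z;
  grp_mul1l : forall x, mul one x = x;
  grp_mul1r : forall x, mul x one = x;
  grp_mulVl : forall x, mul (inv x) x = one;
  grp_mulVr : forall x, mul x (inv x) = one
}.

Section CayleyDefs.
Variables (G : Type) (mul : G -> G -> G) (one : G) (inv : G -> G).

Definition bijective_map (f : G -> G) : Prop :=
  exists g : G -> G, (forall x, g (f x) = x) /\ (forall y, f (g y) = y).

Definition inverse_closed (S : G -> Prop) : Prop := forall s, S s -> S (inv s).

Definition is_subgroup (H : G -> Prop) : Prop :=
  H one /\ (forall x y, H x -> H y -> H (mul x y)) /\ (forall x, H x -> H (inv x)).

Definition generated_by (A : G -> Prop) (x : G) : Prop :=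
  forall H : G -> Prop, is_subgroup H -> (forall a, A a -> H a) -> H x.

Definition generates (A : G -> Prop) : Prop := forall x, generated_by A x.

Definition cay_adj (S : G -> Prop) (x y : G) : Prop := exists s, S s /\ y = mul x s.

(* Colour of the edge {x, y} (with y = x s) is the set {s, s^-1} = {x^-1 y, y^-1 x}.
   [same_colour x y u v] : the colour sets of edges {x,y} and {u,v} coincide. *)
Definition same_colour (x y u v : G) : Prop :=
  mul (inv u) v = mul (inv x) y \/ mul (inv u) v = inv (mul (inv x) y).

Definition cay_aut (S : G -> Prop) (f : G -> G) : Prop :=
  bijective_map f /\ (forall x y, cay_adj S x y <-> cay_adj S (f x) (f y)).

Definition colour_preserving (S : G -> Prop) (f : G -> G) : Prop :=
  cay_aut S f /\
  (forall x y, cay_adj S x y -> same_colour x y (f x) (f y)).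

Definition colour_permuting (S : G -> Prop) (f : G -> G) : Prop :=
  cay_aut S f /\
  (forall x y u v, cay_adj S x y -> cay_adj S u v ->
     same_colour x y u v -> same_colour (f x) (f y) (f u) (f v)).

Definition group_aut (a : G -> G) : Prop :=
  bijective_map a /\ (forall x y, a (mul x y) = mul (a x) (a y)).

Definition affine (f : G -> G) : Prop :=
  exists a g, group_aut a /\ forall x, f x = a (mul g x).

Definition strongly_CCA (S : G -> Prop) : Prop :=
  forall f, colour_permuting S f -> affine f.

Definition S_star (S : G -> Prop) (s : G) : Prop :=
  S s /\
  forall f, colour_preserving S f -> f one = one -> f s = s -> forall x, f x = x.

End CayleyDefs.
Arguments is_group {G}.
Arguments inverse_closed {G}.
Arguments generates {G}.
Arguments S_star {G}.
Arguments strongly_CCA {G}.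

From Stdlib Require Import Setoid.

(* Normalise a colour-permuting automorphism f to phi := f(1)^-1 f, which fixes 1.
   For s in S^*, the map rho := L_{phi(s)^-1} phi L_s phi^-1 is colour-preserving and
   fixes 1.  If rho moved s it would invert s, and so would its conjugate phi rho phi^-1;
   the rigidity of S^* then forces rho to commute with phi, which leads to s = s^-1.
   Hence rho fixes s, so rho is the identity, i.e. phi(s x) = phi(s) phi(x).  The
   elements g with phi(g x) = phi(g) phi(x) for all x form a subgroup, which contains
   S^* and is therefore all of G; so phi is a group automorphism and f is affine. *)

Section Cayley.
Variables (G : Type) (mul : G -> G -> G) (one : G) (inv : G -> G).
Hypothesis hG : is_group mul one inv.

Let mulA := grp_assoc _ _ _ _ hG.
Let mul1g := grp_mul1l _ _ _ _ hG.
Let mulg1 := grp_mul1r _ _ _ _ hG.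
Let mulVg := grp_mulVl _ _ _ _ hG.
Let mulgV := grp_mulVr _ _ _ _ hG.

Lemma mulKg x y : mul (inv x) (mul x y) = y.
Proof. rewrite mulA, mulVg, mul1g. reflexivity. Qed.

Lemma mulKVg x y : mul x (mul (inv x) y) = y.
Proof. rewrite mulA, mulgV, mul1g. reflexivity. Qed.

Lemma mulg_injl x y z : mul x y = mul x z -> y = z.
Proof. intros E. rewrite <- (mulKg x y), <- (mulKg x z), E. reflexivity. Qed.

Lemma invg_unique x y : mul x y = one -> y = inv x.
Proof. intros E. apply (mulg_injl x). rewrite E, mulgV. reflexivity. Qed.

Lemma invgK x : inv (inv x) = x.
Proof. symmetry. apply invg_unique, mulVg. Qed.

Lemma invgM x y : inv (mul x y) = mul (inv y) (inv x).
Proof.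
  symmetry. apply invg_unique.
  rewrite <- mulA, (mulA y), mulgV, mul1g, mulgV. reflexivity.
Qed.

Lemma invg1 : inv one = one.
Proof. symmetry. apply invg_unique, mul1g. Qed.

Lemma invgM_translate h x y : mul (inv (mul h x)) (mul h y) = mul (inv x) y.
Proof. rewrite invgM, <- mulA, mulKg. reflexivity. Qed.

Definition morph_at (phi : G -> G) (g : G) : Prop :=
  forall x, phi (mul g x) = mul (phi g) (phi x).

Lemma morph_at_subgroup phi : phi one = one -> is_subgroup G mul one inv (morph_at phi).
Proof.
  intros phi1. split; [|split].
  - intros x. rewrite mul1g, phi1, mul1g. reflexivity.
  - intros g h Hg Hh x. rewrite <- mulA, Hg, Hh, Hg, mulA. reflexivity.
  - intros g Hg.
    assert (HV : forall x, phi (mul (inv g) x) = mul (inv (phi g)) (phi x)).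
    { intros x. apply (mulg_injl (phi g)). rewrite <- Hg, !mulKVg. reflexivity. }
    intros x. rewrite HV, <- (mulg1 (inv g)), HV, phi1, mulg1. reflexivity.
Qed.

Variable S : G -> Prop.

Lemma cay_adj_iff x y : cay_adj G mul S x y <-> S (mul (inv x) y).
Proof.
  split.
  - intros [s [Hs ->]]. rewrite mulKg. exact Hs.
  - intros H. exists (mul (inv x) y). rewrite mulKVg. auto.
Qed.

Lemma cay_adj1 s : S s -> cay_adj G mul S one s.
Proof. intros Hs. apply cay_adj_iff. rewrite invg1, mul1g. exact Hs. Qed.

Lemma same_colour_translate h x y u v :
  same_colour G mul inv (mul h x) (mul h y) (mul h u) (mul h v) <->
  same_colour G mul inv x y u v.
Proof. unfold same_colour. rewrite !invgM_translate. tauto. Qed.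

Lemma cay_aut_inj f : cay_aut G mul S f -> forall x y, f x = f y -> x = y.
Proof.
  intros [[f' [Hf'f _]] _] x y E. rewrite <- (Hf'f x), E. apply Hf'f.
Qed.

Lemma colour_preserving_translate h : colour_preserving G mul inv S (mul h).
Proof.
  split; [split|].
  - exists (mul (inv h)). split; intros; [apply mulKg | apply mulKVg].
  - intros x y. rewrite !cay_adj_iff, invgM_translate. tauto.
  - intros x y _. left. apply invgM_translate.
Qed.

Lemma colour_preserving_comp a b :
  colour_preserving G mul inv S a -> colour_preserving G mul inv S b ->
  colour_preserving G mul inv S (fun x => a (b x)).
Proof.
  intros [[[a' [Ha'a Haa']] Ha_adj] Ha_col] [[[b' [Hb'b Hbb']] Hb_adj] Hb_col].
  split; [split|].
  - exists (fun y => b' (a' y)). split; intros.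
    + rewrite Ha'a, Hb'b. reflexivity.
    + rewrite Hbb', Haa'. reflexivity.
  - intros x y. rewrite (Hb_adj x y). apply Ha_adj.
  - intros x y Hxy. unfold same_colour in *.
    destruct (Hb_col x y Hxy) as [Hb|Hb];
      destruct (Ha_col (b x) (b y) (proj1 (Hb_adj x y) Hxy)) as [Ha|Ha];
      rewrite Ha, Hb; auto.
    left. apply invgK.
Qed.

Lemma colour_preserving_inverse a a' :
  colour_preserving G mul inv S a ->
  (forall x, a' (a x) = x) -> (forall y, a (a' y) = y) ->
  colour_preserving G mul inv S a'.
Proof.
  intros [[_ Ha_adj] Ha_col] Ha'a Haa'. split; [split|].
  - exists a. split; assumption.
  - intros x y. rewrite (Ha_adj (a' x) (a' y)), !Haa'. tauto.
  - intros x y Hxy.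
    assert (Hadj : cay_adj G mul S (a (a' x)) (a (a' y))) by (rewrite !Haa'; exact Hxy).
    apply Ha_adj, Ha_col in Hadj. rewrite !Haa' in Hadj.
    unfold same_colour in *. destruct Hadj as [E|E]; rewrite E; auto.
    right. rewrite invgK. reflexivity.
Qed.

Lemma colour_preserving_fix1 tau t :
  colour_preserving G mul inv S tau -> tau one = one -> S t ->
  tau t = t \/ tau t = inv t.
Proof.
  intros [_ Hcol] tau1 Ht.
  destruct (Hcol _ _ (cay_adj1 t Ht)) as [E|E];
    rewrite tau1, invg1, !mul1g in E; auto.
Qed.

Lemma S_star_rigid s tau1 tau2 :
  S_star mul one inv S s ->
  colour_preserving G mul inv S tau1 -> colour_preserving G mul inv S tau2 ->
  tau1 one = one -> tau2 one = one -> tau1 s = tau2 s ->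
  forall x, tau1 x = tau2 x.
Proof.
  intros [_ Hrigid] Htau1 Htau2 tau1_1 tau2_1 Es x.
  pose proof Htau2 as [[[tau2' [H21 H12]] _] _].
  pose proof (colour_preserving_comp _ _
    (colour_preserving_inverse _ _ Htau2 H21 H12) Htau1) as Hcomp.
  assert (E : tau2' (tau1 x) = x).
  { apply (Hrigid _ Hcomp).
    - rewrite tau1_1, <- tau2_1 at 1. apply H21.
    - rewrite Es. apply H21. }
  rewrite <- E at 2. rewrite H12. reflexivity.
Qed.

Lemma colour_permuting_translate h f :
  colour_permuting G mul inv S f -> colour_permuting G mul inv S (fun x => mul h (f x)).
Proof.
  intros [[[f' [Hf'f Hff']] Hf_adj] Hf_col]. split; [split|].
  - exists (fun y => f' (mul (inv h) y)). split; intros.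
    + rewrite mulKg. apply Hf'f.
    + rewrite Hff'. apply mulKVg.
  - intros x y. rewrite (Hf_adj x y), !cay_adj_iff, invgM_translate. tauto.
  - intros x y u v Hxy Huv Hcol. apply same_colour_translate. auto.
Qed.

Hypothesis hS : inverse_closed inv S.

Lemma colour_preserving_swap_inv tau s :
  colour_preserving G mul inv S tau -> tau one = one -> S s ->
  tau s = inv s -> tau (inv s) = s \/ inv s = s.
Proof.
  intros Htau tau1 Hs Es.
  destruct (colour_preserving_fix1 tau (inv s) Htau tau1 (hS s Hs)) as [E|E].
  - right. apply (cay_aut_inj tau (proj1 Htau)). rewrite E, Es. reflexivity.
  - left. rewrite E. apply invgK.
Qed.

Section ColourPermuting.
Variables phi phi' : G -> G.
Hypothesis hphi : colour_permuting G mul inv S phi.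
Hypothesis phi'K : forall x, phi' (phi x) = x.
Hypothesis phiK' : forall y, phi (phi' y) = y.
Hypothesis phi1 : phi one = one.

Let phi_adj : forall x y, cay_adj G mul S x y <-> cay_adj G mul S (phi x) (phi y).
Proof. apply hphi. Qed.

Let phi_inj : forall x y, phi x = phi y -> x = y.
Proof. apply cay_aut_inj, hphi. Qed.

Lemma colour_preserving_conj a :
  colour_preserving G mul inv S a ->
  colour_preserving G mul inv S (fun y => phi (a (phi' y))).
Proof.
  intros [[[a' [Ha'a Haa']] Ha_adj] Ha_col]. split; [split|].
  - exists (fun y => phi (a' (phi' y))). split; intros.
    + rewrite phi'K, Ha'a, phiK'. reflexivity.
    + rewrite phi'K, Haa', phiK'. reflexivity.
  - intros x y. rewrite <- phi_adj, <- Ha_adj, (phi_adj (phi' x)), !phiK'. tauto.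
  - intros x y Hxy.
    assert (Hadj : cay_adj G mul S (phi' x) (phi' y))
      by (apply phi_adj; rewrite !phiK'; exact Hxy).
    pose proof (proj2 hphi _ _ _ _ Hadj (proj1 (Ha_adj _ _) Hadj) (Ha_col _ _ Hadj))
      as H.
    rewrite !phiK' in H. exact H.
Qed.

(* The edges {1, s} and {1, s^-1} have the same colour, so their images do too. *)
Lemma colour_permuting_fix1_inv s :
  S s -> phi (inv s) = phi s \/ phi (inv s) = inv (phi s).
Proof.
  intros Hs.
  assert (Hcol : same_colour G mul inv one s one (inv s))
    by (right; rewrite invg1, !mul1g; reflexivity).
  pose proof (proj2 hphi _ _ _ _ (cay_adj1 s Hs) (cay_adj1 (inv s) (hS s Hs)) Hcol) as H.
  unfold same_colour in H. rewrite phi1, invg1, !mul1g in H. tauto.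
Qed.

Lemma colour_permuting_morph_at_S_star s :
  S_star mul one inv S s -> morph_at phi s.
Proof.
  intros Hs. pose proof Hs as [HsS Hrigid].
  set (rho := fun y => mul (inv (phi s)) (phi (mul s (phi' y)))).
  assert (Hrho : colour_preserving G mul inv S rho)
    by exact (colour_preserving_comp _ _ (colour_preserving_translate _)
                (colour_preserving_conj _ (colour_preserving_translate s))).
  assert (rho1 : rho one = one).
  { unfold rho. rewrite <- phi1 at 1. rewrite phi'K, mulg1. apply mulVg. }
  set (rho' := fun y => phi (rho (phi' y))).
  assert (Hrho' : colour_preserving G mul inv S rho') by exact (colour_preserving_conj _ Hrho).
  assert (rho'1 : rho' one = one).
  { unfold rho'. rewrite <- phi1 at 1. rewrite phi'K, rho1. exact phi1. }
  assert (Hrho_s : rho s = s).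
  { destruct (colour_preserving_fix1 rho s Hrho rho1 HsS) as [|Es]; [assumption|].
    rewrite Es. apply phi_inj.
    destruct (colour_preserving_fix1 rho' s Hrho' rho'1 HsS) as [E's|E's].
    - (* rho' is the identity, hence so is rho *)
      pose proof (Hrigid _ Hrho' rho'1 E's (phi s)) as E.
      unfold rho' in E. rewrite phi'K, Es in E. exact E.
    - (* rho and rho' agree at s, hence everywhere: rho commutes with phi *)
      pose proof (S_star_rigid s _ _ Hs Hrho Hrho' rho1 rho'1 (eq_trans Es (eq_sym E's)))
        as Hcomm.
      destruct (colour_preserving_swap_inv rho s Hrho rho1 HsS Es) as [Es'|Es'];
        [|rewrite Es'; reflexivity].
      assert (Hphis : phi s = inv (phi s)).
      { rewrite <- Es' at 1.
        transitivity (rho (phi (inv s))).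
        - rewrite (Hcomm (phi (inv s))). unfold rho'. rewrite phi'K. reflexivity.
        - unfold rho. rewrite phi'K, mulgV, phi1, mulg1. reflexivity. }
      destruct (colour_permuting_fix1_inv s HsS) as [E|E]; rewrite E; congruence. }
  intros x. pose proof (Hrigid _ Hrho rho1 Hrho_s (phi x)) as E.
  unfold rho in E. rewrite phi'K in E. rewrite <- E, mulKVg. reflexivity.
Qed.

End ColourPermuting.

Lemma colour_permuting_fix1_group_aut phi :
  generates mul one inv (S_star mul one inv S) ->
  colour_permuting G mul inv S phi -> phi one = one -> group_aut G mul phi.
Proof.
  intros hgen Hphi phi1. pose proof Hphi as [[[phi' [phi'K phiK']] _] _].
  split; [exists phi'; split; assumption|].
  intros g. apply (hgen g _ (morph_at_subgroup phi phi1)).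
  intros s Hs. exact (colour_permuting_morph_at_S_star phi phi' Hphi phi'K phiK' phi1 s Hs).
Qed.

End Cayley.

Theorem lemma4p4 (G : Type) (mul : G -> G -> G) (one : G) (inv : G -> G)
  (hG : is_group mul one inv) (S : G -> Prop)
  (hS : inverse_closed inv S) (hS1 : ~ S one)
  (hgen : generates mul one inv (S_star mul one inv S)) :
  strongly_CCA mul inv S.
Proof.
  intros f Hf.
  set (c := f one).
  set (phi := fun x => mul (inv c) (f x)).
  assert (Hphi : group_aut G mul phi).
  { apply (colour_permuting_fix1_group_aut G mul one inv hG S hS phi hgen).
    - exact (colour_permuting_translate G mul one inv hG S (inv c) f Hf).
    - apply (grp_mulVl _ _ _ _ hG). }
  pose proof Hphi as [[phi' [_ phiK']] phiM].
  exists phi, (phi' c). split; [exact Hphi|].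
  intros x. rewrite phiM, phiK'. unfold phi. rewrite (mulKVg _ _ _ _ hG). reflexivity.
Qed.
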